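(* Let $p\in[1,\infty]$, $\alpha\in[0,1]$ irrational, $\theta\in[0,1)$ and $\lambda\in\mathbb{R}$. Then $\sigma(H_{\lambda,\alpha,\theta})\subset\sigma((H_{\lambda,\alpha,\theta})_+)$.
   Context: $(H_{\lambda,\alpha,\theta}x)_n=x_{n+1}+x_{n-1}+\lambda v_{\alpha,\theta}(n)x_n$ on $\ell^p(\mathbb{Z})$ with $v_{\alpha,\theta}(n)=\chi_{[1-\alpha,1)}(n\alpha+\theta\bmod 1)$. For an operator $A=(a_{ij})_{i,j\in\mathbb{Z}}$, $A_+:=(a_{ij})_{i,j=0}^\infty$ acting on $\ell^p(\mathbb{Z}_+)$, $\mathbb{Z}_+=\{0,1,2,\dots\}$. *)

From Stdlib Require Import Reals ZArith.
From Coquelicot Require Import Coquelicot.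
Open Scope R_scope.

(* a ^ q for a >= 0 and real q > 0, with the convention 0 ^ q = 0 *)
Definition rpow (a q : R) : R := if Rle_dec a 0 then 0 else Rpower a q.

Definition exponent_ok (p : Rbar) : Prop :=
  match p with Finite q => 1 <= q | p_infty => True | m_infty => False end.

Definition lpnorm_le_N (p : Rbar) (u : nat -> C) (M : R) : Prop :=
  match p with
  | Finite q => ex_series (fun n => rpow (Cmod (u n)) q) /\
                Series (fun n => rpow (Cmod (u n)) q) <= rpow M q /\ 0 <= M
  | p_infty => forall n, Cmod (u n) <= M
  | m_infty => False
  end.

(* ||u||_{l^p(Z)} <= M ; the sum over Z is split into n >= 0 and n < 0 *)
Definition lpnorm_le_Z (p : Rbar) (u : Z -> C) (M : R) : Prop :=
  match p with
  | Finite q =>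
      ex_series (fun n : nat => rpow (Cmod (u (Z.of_nat n))) q) /\
      ex_series (fun n : nat => rpow (Cmod (u (- Z.of_nat n - 1)%Z)) q) /\
      Series (fun n : nat => rpow (Cmod (u (Z.of_nat n))) q)
      + Series (fun n : nat => rpow (Cmod (u (- Z.of_nat n - 1)%Z)) q)
        <= rpow M q /\ 0 <= M
  | p_infty => forall n, Cmod (u n) <= M
  | m_infty => False
  end.

(* T - z I is boundedly invertible on the sequence space given by the
   "norm <= M" predicate [nle]:  there is a bounded linear operator B on the
   space which is a two-sided inverse of T - z on the space. *)
Definition resolvent {I : Type} (nle : (I -> C) -> R -> Prop)
    (T : (I -> C) -> (I -> C)) (z : C) : Prop :=
  let inlp := fun x => exists M, nle x M in
  let S := fun x => (fun i => Cminus (T x i) (Cmult z (x i))) in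
  exists B : (I -> C) -> (I -> C),
    (forall x, inlp x -> inlp (B x)) /\
    (forall x y a, inlp x -> inlp y ->
        B (fun i => Cplus (x i) (Cmult a (y i))) =
        (fun i => Cplus (B x i) (Cmult a (B y i)))) /\
    (exists K, 0 <= K /\ forall x M, nle x M -> nle (B x) (K * M)) /\
    (forall x, inlp x -> B (S x) = x) /\
    (forall x, inlp x -> S (B x) = x).

Definition spectrum {I : Type} (nle : (I -> C) -> R -> Prop)
    (T : (I -> C) -> (I -> C)) (z : C) : Prop := ~ resolvent nle T z.

Definition sturm_v (alpha theta : R) (n : Z) : R :=
  let f := frac_part (IZR n * alpha + theta) in
  if Rle_dec (1 - alpha) f then (if Rlt_dec f 1 then 1 else 0) else 0.

Definition Hop (lambda alpha theta : R) (x : Z -> C) : Z -> C :=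
  fun n => Cplus (Cplus (x (n + 1)%Z) (x (n - 1)%Z))
                 (Cmult (RtoC (lambda * sturm_v alpha theta n)) (x n)).

(* Compression A_+ = (a_ij)_{i,j>=0}: extend by zero to Z, apply, restrict. *)
Definition ext0 (x : nat -> C) : Z -> C :=
  fun n => match n with Z.neg _ => RtoC 0 | _ => x (Z.to_nat n) end.

Definition Hop_plus (lambda alpha theta : R) (x : nat -> C) : nat -> C :=
  fun n => Hop lambda alpha theta (ext0 x) (Z.of_nat n).

Definition irrational (a : R) : Prop :=
  forall p q : Z, q <> 0%Z -> a * IZR q <> IZR p.

From Stdlib Require Import Reals ZArith Lia Lra FunctionalExtensionality PropExtensionality Classical ClassicalEpsilon.
From Coquelicot Require Import Coquelicot.
Open Scope R_scope.

(* Idea: since alpha is irrational, the orbit k alpha mod 1 comes back to 0 from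
   the right arbitrarily closely, so every finite window of the Sturmian potential
   v recurs arbitrarily far to the right.  Translating a finitely supported w into
   such a recurrence of its support turns H - z into H_+ - z, and the bounded
   inverse of H_+ - z gives |w m| <= K ||(H - z) w||.  Applied to chi d for a tent
   cutoff chi of width L, the commutator [H, chi] = O(1/L) shows that H - z is
   injective on l^p(Z).  The same estimate makes the half-line solutions of the
   truncated equations (H - z) x = 1_[-j,j] y converge pointwise; the limit solves
   (H - z) x = y, and ||x|| <= K ||y|| passes to the limit window by window,
   which covers p = oo as well. *)

Lemma rpow_nonneg t q : 0 <= rpow t q.
Proof. unfold rpow; destruct (Rle_dec t 0); [lra | left; apply exp_pos]. Qed.

Lemma rpow_0_l q : rpow 0 q = 0.
Proof. unfold rpow; destruct (Rle_dec 0 0); lra. Qed.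

Lemma rpow_Rpower t q : 0 < t -> rpow t q = Rpower t q.
Proof. intros; unfold rpow; destruct (Rle_dec t 0); lra. Qed.

Lemma rpow_le_compat a b q : 0 <= q -> 0 <= a <= b -> rpow a q <= rpow b q.
Proof.
  intros Hq [Ha Hb]; unfold rpow.
  destruct (Rle_dec a 0), (Rle_dec b 0); try lra; [left; apply exp_pos|].
  apply Rle_Rpower_l; lra.
Qed.

Lemma rpow_lt_compat a b q : 0 < q -> 0 <= a < b -> rpow a q < rpow b q.
Proof.
  intros Hq [Ha Hb]; unfold rpow.
  destruct (Rle_dec a 0), (Rle_dec b 0); try lra; [apply exp_pos|].
  apply Rlt_Rpower_l; lra.
Qed.

Lemma rpow_le_reg a b q : 0 < q -> 0 <= b -> rpow a q <= rpow b q -> a <= b.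
Proof.
  intros Hq Hb H; destruct (Rle_dec a b) as [|Hab]; auto.
  assert (rpow b q < rpow a q) by (apply rpow_lt_compat; lra); lra.
Qed.

Lemma rpow_mult a b q : 0 <= a -> 0 <= b -> rpow (a * b) q = rpow a q * rpow b q.
Proof.
  intros Ha Hb.
  destruct (Req_dec a 0) as [->|]; [rewrite Rmult_0_l, rpow_0_l; ring|].
  destruct (Req_dec b 0) as [->|]; [rewrite Rmult_0_r, rpow_0_l; ring|].
  rewrite !rpow_Rpower by (try apply Rmult_lt_0_compat; lra).
  symmetry; apply Rpower_mult_distr; lra.
Qed.

Lemma rpow_ge_base t q : 1 <= t -> 1 <= q -> t <= rpow t q.
Proof.
  intros Ht Hq; rewrite rpow_Rpower by lra.
  rewrite <- (Rpower_1 t) at 1 by lra; apply Rle_Rpower; lra.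
Qed.

Lemma rpow_le_base t q : 0 <= t <= 1 -> 1 <= q -> rpow t q <= t.
Proof.
  intros Ht Hq; destruct (Req_dec t 0) as [->|]; [rewrite rpow_0_l; lra|].
  rewrite rpow_Rpower by lra.
  replace q with (1 + (q - 1)) by ring; rewrite Rpower_plus, Rpower_1 by lra.
  assert (Hle : Rpower t (q - 1) <= Rpower 1 (q - 1)) by (apply Rle_Rpower_l; lra).
  replace (Rpower 1 (q - 1)) with 1 in Hle
    by (unfold Rpower; rewrite ln_1, Rmult_0_r, exp_0; reflexivity).
  assert (t * Rpower t (q - 1) <= t * 1) by (apply Rmult_le_compat_l; lra).
  lra.
Qed.

Lemma rpow_sum3_le a b c q : 0 <= q -> 0 <= a -> 0 <= b -> 0 <= c ->
  rpow (a + b + c) q <= rpow 3 q * (rpow a q + rpow b q + rpow c q).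
Proof.
  intros Hq Ha Hb Hc; set (m := Rmax a (Rmax b c)).
  assert (Hm : a <= m /\ b <= m /\ c <= m).
  { unfold m; repeat split; repeat (apply Rmax_l || apply Rmax_r ||
      (eapply Rle_trans; [|apply Rmax_r])). }
  assert (Hmax : rpow m q <= rpow a q + rpow b q + rpow c q).
  { pose proof (rpow_nonneg a q); pose proof (rpow_nonneg b q); pose proof (rpow_nonneg c q).
    unfold m; repeat apply Rmax_case_strong; intros; lra. }
  apply Rle_trans with (rpow (3 * m) q); [apply rpow_le_compat; lra|].
  rewrite rpow_mult by lra; apply Rmult_le_compat_l; [apply rpow_nonneg | exact Hmax].
Qed.

Lemma rpow_continuity_pt t0 q : 1 <= q -> continuity_pt (fun t => rpow t q) t0.
Proof.
  intros Hq; destruct (Rlt_dec 0 t0) as [Ht0|Ht0].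
  - apply continuity_pt_ext_loc with (f := fun t => Rpower t q).
    + exists (mkposreal t0 Ht0); intros y Hy.
      unfold ball in Hy; simpl in Hy; unfold AbsRing_ball, abs, minus, plus, opp in Hy; simpl in Hy.
      apply Rabs_lt_between in Hy.
      rewrite rpow_Rpower; [reflexivity | lra].
    + apply derivable_continuous_pt; exists (q * Rpower t0 (q - 1)).
      apply derivable_pt_lim_power; auto.
  - (* near a point t0 <= 0 the function is squeezed between 0 and max(t,0) *)
    intros e He; exists (Rmin e 1); split; [apply Rmin_pos; lra|].
    intros x [_ Hx]; simpl in *; unfold R_dist in *.
    assert (rpow t0 q = 0) as -> by (unfold rpow; destruct (Rle_dec t0 0); lra).
    rewrite Rminus_0_r, Rabs_pos_eq by apply rpow_nonneg.
    destruct (Rle_dec x 0); [unfold rpow; destruct (Rle_dec x 0); lra|].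
    pose proof (Rmin_l e 1); pose proof (Rmin_r e 1).
    rewrite Rabs_pos_eq in Hx by lra.
    pose proof (rpow_le_base x q ltac:(lra) Hq); lra.
Qed.

Fixpoint psum (g : nat -> R) (n : nat) : R :=
  match n with O => 0 | S n => psum g n + g n end.

Fixpoint zsum (g : Z -> R) (a : Z) (n : nat) : R :=
  match n with O => 0 | S n => zsum g a n + g (a + Z.of_nat n)%Z end.

Lemma psum_nonneg g n : (forall i, 0 <= g i) -> 0 <= psum g n.
Proof. intros H; induction n; simpl; [lra|]; specialize (H n); lra. Qed.

Lemma zsum_nonneg g a n : (forall m, 0 <= g m) -> 0 <= zsum g a n.
Proof. intros H; induction n; simpl; [lra|]; specialize (H (a + Z.of_nat n)%Z); lra. Qed.

Lemma psum_ext g h n : (forall i, g i = h i) -> psum g n = psum h n.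
Proof. intros H; induction n; simpl; auto; rewrite IHn, H; auto. Qed.

Lemma zsum_ext g h a n : (forall m, g m = h m) -> zsum g a n = zsum h a n.
Proof. intros H; induction n; simpl; auto; rewrite IHn, H; auto. Qed.

Lemma zsum_le g h a n : (forall m, g m <= h m) -> zsum g a n <= zsum h a n.
Proof. intros H; induction n; simpl; [lra|]; specialize (H (a + Z.of_nat n)%Z); lra. Qed.

Lemma zsum_plus g h a n : zsum (fun m => g m + h m) a n = zsum g a n + zsum h a n.
Proof. induction n; simpl; [lra|]; rewrite IHn; ring. Qed.

Lemma zsum_scal c g a n : zsum (fun m => c * g m) a n = c * zsum g a n.
Proof. induction n; simpl; [lra|]; rewrite IHn; ring. Qed.

Lemma zsum_shift g s a n : zsum (fun m => g (m + s)%Z) a n = zsum g (a + s) n.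
Proof.
  induction n; simpl; [lra|]; rewrite IHn.
  replace (a + Z.of_nat n + s)%Z with (a + s + Z.of_nat n)%Z by lia; reflexivity.
Qed.

Lemma zsum_1 g a : zsum g a 1 = g a.
Proof. simpl; rewrite Z.add_0_r; ring. Qed.

Lemma zsum_add g a n m : zsum g a (n + m) = zsum g a n + zsum g (a + Z.of_nat n) m.
Proof.
  induction m; simpl; [rewrite Nat.add_0_r; ring|].
  rewrite Nat.add_succ_r; simpl; rewrite IHm.
  replace (a + Z.of_nat (n + m))%Z with (a + Z.of_nat n + Z.of_nat m)%Z by lia; ring.
Qed.

Lemma zsum_le_subwindow g a n a' n' : (forall m, 0 <= g m) -> (a <= a')%Z ->
  (a' + Z.of_nat n' <= a + Z.of_nat n)%Z -> zsum g a' n' <= zsum g a n.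
Proof.
  intros Hg H1 H2.
  replace n with (Z.to_nat (a' - a) + n' + (n - Z.to_nat (a' - a) - n'))%nat by lia.
  rewrite !zsum_add.
  replace (a + Z.of_nat (Z.to_nat (a' - a)))%Z with a' by lia.
  pose proof (zsum_nonneg g a (Z.to_nat (a' - a)) Hg).
  pose proof (zsum_nonneg g (a + Z.of_nat (Z.to_nat (a' - a) + n'))
                (n - Z.to_nat (a' - a) - n') Hg).
  lra.
Qed.

Lemma zsum_0_psum g n : zsum g 0 n = psum (fun i => g (Z.of_nat i)) n.
Proof. induction n; simpl; [lra|]; rewrite IHn; reflexivity. Qed.

Lemma zsum_neg_psum g n : zsum g (- Z.of_nat n) n = psum (fun i => g (- Z.of_nat i - 1)%Z) n.
Proof.
  induction n; [simpl; lra|].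
  change (S n) with (1 + n)%nat at 2; rewrite zsum_add, zsum_1; simpl psum; rewrite <- IHn.
  replace (- Z.of_nat (S n))%Z with (- Z.of_nat n - 1)%Z by lia.
  replace (- Z.of_nat n - 1 + Z.of_nat 1)%Z with (- Z.of_nat n)%Z by lia; ring.
Qed.

Lemma zsum_symmetric g n : zsum g (- Z.of_nat n) (n + n) =
  psum (fun i => g (- Z.of_nat i - 1)%Z) n + psum (fun i => g (Z.of_nat i)) n.
Proof.
  rewrite zsum_add, zsum_neg_psum, <- zsum_0_psum.
  replace (- Z.of_nat n + Z.of_nat n)%Z with 0%Z by lia; reflexivity.
Qed.

Lemma zsum_le_symmetric g a n : (forall m, 0 <= g m) ->
  let N := Z.to_nat (Z.abs a + Z.of_nat n) in
  zsum g a n <= psum (fun i => g (- Z.of_nat i - 1)%Z) N + psum (fun i => g (Z.of_nat i)) N.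
Proof.
  intros Hg N; rewrite <- zsum_symmetric.
  apply zsum_le_subwindow; auto; unfold N; lia.
Qed.

Lemma psum_zsum g k n : psum (fun i => g (Z.of_nat i - k)%Z) n = zsum g (- k) n.
Proof.
  induction n; simpl; [lra|]; rewrite IHn.
  replace (Z.of_nat n - k)%Z with (- k + Z.of_nat n)%Z by lia; reflexivity.
Qed.

Lemma psum_ge_term g n i : (forall j, 0 <= g j) -> (i < n)%nat -> g i <= psum g n.
Proof.
  intros Hg Hi; induction n; [lia|]; simpl.
  destruct (Nat.eq_dec i n) as [->|]; [pose proof (psum_nonneg g n Hg); lra|].
  pose proof (Hg n); assert (g i <= psum g n) by (apply IHn; lia); lra.
Qed.

Lemma psum_le_support g n N : (forall i, 0 <= g i) -> (forall i, (n <= i)%nat -> g i = 0) ->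
  psum g N <= psum g n.
Proof.
  intros Hg H; induction N; simpl; [apply psum_nonneg; auto|].
  destruct (le_lt_dec n N) as [HN|HN]; [rewrite H by auto; lra|].
  clear IHN H; induction HN; simpl; [lra|]; specialize (Hg m); lra.
Qed.

Lemma sum_n_psum g n : sum_n g n = psum g (S n).
Proof.
  rewrite sum_n_Reals; induction n; simpl; [lra|].
  rewrite IHn; reflexivity.
Qed.

Lemma is_lim_seq_psum g : ex_series g -> is_lim_seq (psum g) (Series g).
Proof.
  intros H; apply is_lim_seq_incr_1.
  apply (is_lim_seq_ext (sum_n g)); [intros n; apply sum_n_psum|].
  apply Series_correct, H.
Qed.

Lemma psum_le_Series g n : (forall i, 0 <= g i) -> ex_series g -> psum g n <= Series g.
Proof.
  intros Hg H; apply is_lim_seq_incr_compare; [apply is_lim_seq_psum; auto|].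
  intros m; simpl; specialize (Hg m); lra.
Qed.

Lemma ex_series_psum_bounded g c : (forall i, 0 <= g i) -> (forall n, psum g n <= c) ->
  ex_series g.
Proof.
  intros Hg Hc.
  assert (ex_finite_lim_seq (psum g)) as [l Hl].
  { apply ex_finite_lim_seq_incr with c; auto; intros m; simpl; specialize (Hg m); lra. }
  exists l; apply is_lim_seq_incr_1 in Hl.
  apply (is_lim_seq_ext _ (sum_n g)) in Hl; [exact Hl|].
  intros n; symmetry; apply sum_n_psum.
Qed.

Lemma is_lim_seq_le_const u (l c : R) : is_lim_seq u l -> (forall n, u n <= c) -> l <= c.
Proof.
  intros Hu H.
  exact (is_lim_seq_le u (fun _ => c) l c H Hu (is_lim_seq_const c)).
Qed.

Add Field C_field : C_field_theory.

(* l^p bounds through finite window sums, so that no series has to converge. *)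
Definition lpZ (p : Rbar) (f : Z -> C) (M : R) : Prop :=
  match p with
  | Finite q => 0 <= M /\ forall a n, zsum (fun m => rpow (Cmod (f m)) q) a n <= rpow M q
  | p_infty => forall m, Cmod (f m) <= M
  | m_infty => False
  end.

Definition lpN (p : Rbar) (u : nat -> C) (M : R) : Prop :=
  match p with
  | Finite q => 0 <= M /\ forall n, psum (fun i => rpow (Cmod (u i)) q) n <= rpow M q
  | p_infty => forall i, Cmod (u i) <= M
  | m_infty => False
  end.

Lemma lpZ_iff p f M : lpnorm_le_Z p f M <-> lpZ p f M.
Proof.
  destruct p as [q| |]; simpl; try tauto.
  set (G := fun m => rpow (Cmod (f m)) q).
  assert (HG : forall m, 0 <= G m) by (intros; apply rpow_nonneg).
  split.
  - intros [Epos [Eneg [HS HM]]]; split; auto; intros a n.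
    eapply Rle_trans; [apply (zsum_le_symmetric G a n HG)|].
    pose proof (psum_le_Series _ (Z.to_nat (Z.abs a + Z.of_nat n)) (fun i => HG _) Epos).
    pose proof (psum_le_Series _ (Z.to_nat (Z.abs a + Z.of_nat n)) (fun i => HG _) Eneg).
    unfold G in *; lra.
  - intros [HM H].
    assert (Epos : ex_series (fun n => G (Z.of_nat n))).
    { apply ex_series_psum_bounded with (rpow M q); auto.
      intros n; rewrite <- zsum_0_psum; apply H. }
    assert (Eneg : ex_series (fun n => G (- Z.of_nat n - 1)%Z)).
    { apply ex_series_psum_bounded with (rpow M q); auto.
      intros n; rewrite <- zsum_neg_psum; apply H. }
    do 3 (split; auto); rewrite Rplus_comm.
    apply is_lim_seq_le_const with (fun n => zsum G (- Z.of_nat n) (n + n)); [|intros; apply H].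
    apply (is_lim_seq_ext (fun n => psum (fun i => G (- Z.of_nat i - 1)%Z) n
                                    + psum (fun i => G (Z.of_nat i)) n)).
    { intros; rewrite zsum_symmetric; reflexivity. }
    apply is_lim_seq_plus'; apply is_lim_seq_psum; auto.
Qed.

Lemma lpN_iff p u M : lpnorm_le_N p u M <-> lpN p u M.
Proof.
  destruct p as [q| |]; simpl; try tauto.
  set (G := fun i => rpow (Cmod (u i)) q).
  assert (HG : forall i, 0 <= G i) by (intros; apply rpow_nonneg).
  split.
  - intros [E [HS HM]]; split; auto; intros n.
    pose proof (psum_le_Series G n HG E); unfold G in *; lra.
  - intros [HM H].
    assert (E : ex_series G) by (apply ex_series_psum_bounded with (rpow M q); auto).
    do 2 (split; auto).
    apply is_lim_seq_le_const with (psum G); auto; apply is_lim_seq_psum; auto.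
Qed.

Lemma Cmod_triangle_inv a b : Rabs (Cmod a - Cmod b) <= Cmod (Cminus a b).
Proof.
  assert (Cmod a <= Cmod (Cminus a b) + Cmod b).
  { replace a with (Cplus (Cminus a b) b) at 1 by ring; apply Cmod_triangle. }
  assert (Cmod b <= Cmod (Cminus a b) + Cmod a).
  { replace b with (Cplus (Copp (Cminus a b)) a) at 1 by ring.
    rewrite <- (Cmod_opp (Cminus a b)); apply Cmod_triangle. }
  apply Rabs_le; lra.
Qed.

Lemma lpZ_eq p : lpnorm_le_Z p = lpZ p.
Proof.
  extensionality f; extensionality M; apply propositional_extensionality, lpZ_iff.
Qed.

Lemma lpN_eq p : lpnorm_le_N p = lpN p.
Proof.
  extensionality u; extensionality M; apply propositional_extensionality, lpN_iff.
Qed.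

Section LpNorms.
Variable p : Rbar.
Hypothesis Hp : exponent_ok p.

Lemma lpZ_nonneg f M : lpZ p f M -> 0 <= M.
Proof.
  destruct p; simpl; try tauto.
  intros H; pose proof (Cmod_ge_0 (f 0%Z)); specialize (H 0%Z); lra.
Qed.

Lemma lpZ_weaken f M M' : lpZ p f M -> M <= M' -> lpZ p f M'.
Proof.
  destruct p as [q| |]; simpl in *; try tauto.
  - intros [HM H] HM'; split; [lra|]; intros a n.
    eapply Rle_trans; [apply H | apply rpow_le_compat; lra].
  - intros H HM m; specialize (H m); lra.
Qed.

Lemma lpZ_dominated f h M : (forall m, Cmod (h m) <= Cmod (f m)) -> lpZ p f M -> lpZ p h M.
Proof.
  destruct p as [q| |]; simpl in *; try tauto.
  - intros Hd [HM H]; split; auto; intros a n.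
    eapply Rle_trans; [|apply (H a n)].
    apply zsum_le; intros; apply rpow_le_compat; [lra|].
    split; [apply Cmod_ge_0 | auto].
  - intros Hd H m; specialize (Hd m); specialize (H m); lra.
Qed.

Lemma lpZ_dominated3 c A f1 f2 f3 s1 s2 s3 h : 0 <= c ->
  lpZ p f1 A -> lpZ p f2 A -> lpZ p f3 A ->
  (forall m, Cmod (h m) <=
     c * (Cmod (f1 (m + s1)%Z) + Cmod (f2 (m + s2)%Z) + Cmod (f3 (m + s3)%Z))) ->
  lpZ p h (9 * c * A).
Proof.
  intros Hc H1 H2 H3 Hh; pose proof (lpZ_nonneg _ _ H1) as HA.
  destruct p as [q| |]; simpl in *; try tauto.
  - destruct H1 as [_ H1], H2 as [_ H2], H3 as [_ H3].
    split; [apply Rmult_le_pos; lra|]; intros a n.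
    set (F := fun (f : Z -> C) s m => rpow (Cmod (f (m + s)%Z)) q).
    apply Rle_trans with
      (zsum (fun m => rpow c q * (rpow 3 q * (F f1 s1 m + F f2 s2 m + F f3 s3 m))) a n).
    { apply zsum_le; intros m.
      pose proof (Cmod_ge_0 (f1 (m + s1)%Z)); pose proof (Cmod_ge_0 (f2 (m + s2)%Z)).
      pose proof (Cmod_ge_0 (f3 (m + s3)%Z)).
      eapply Rle_trans; [apply rpow_le_compat; [lra | split; [apply Cmod_ge_0 | apply Hh]]|].
      rewrite rpow_mult by lra; apply Rmult_le_compat_l; [apply rpow_nonneg|].
      apply rpow_sum3_le; lra. }
    rewrite !zsum_scal, !zsum_plus; unfold F.
    rewrite (zsum_shift (fun m => rpow (Cmod (f1 m)) q)),
      (zsum_shift (fun m => rpow (Cmod (f2 m)) q)), (zsum_shift (fun m => rpow (Cmod (f3 m)) q)).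
    specialize (H1 (a + s1)%Z n); specialize (H2 (a + s2)%Z n); specialize (H3 (a + s3)%Z n).
    (* 3^q * 3 <= 3^q * 3^q = 9^q *)
    replace 9 with (3 * 3) by ring; rewrite !rpow_mult by lra.
    pose proof (rpow_ge_base 3 q ltac:(lra) Hp).
    pose proof (rpow_nonneg c q); pose proof (rpow_nonneg 3 q); pose proof (rpow_nonneg A q).
    apply Rle_trans with (rpow c q * (rpow 3 q * (rpow 3 q * rpow A q))); [|right; ring].
    apply Rmult_le_compat_l; [lra|]; apply Rmult_le_compat_l; [lra|]; nra.
  - intros m; eapply Rle_trans; [apply Hh|].
    specialize (H1 (m + s1)%Z); specialize (H2 (m + s2)%Z); specialize (H3 (m + s3)%Z); nra.
Qed.

Lemma lpZ_lincomb x y a A B : lpZ p x A -> lpZ p y B ->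
  lpZ p (fun m => Cplus (x m) (Cmult a (y m))) (9 * (1 + Cmod a) * Rmax A B).
Proof.
  intros Hx Hy.
  assert (Hx' : lpZ p x (Rmax A B)) by (apply lpZ_weaken with A; auto; apply Rmax_l).
  assert (Hy' : lpZ p y (Rmax A B)) by (apply lpZ_weaken with B; auto; apply Rmax_r).
  apply (lpZ_dominated3 (1 + Cmod a) _ x y x 0 0 0); auto; [pose proof (Cmod_ge_0 a); lra|].
  intros m; rewrite !Z.add_0_r; eapply Rle_trans; [apply Cmod_triangle|].
  rewrite Cmod_mult.
  pose proof (Cmod_ge_0 a); pose proof (Cmod_ge_0 (x m)); pose proof (Cmod_ge_0 (y m)); nra.
Qed.

Lemma lpZ_sub x y A B : lpZ p x A -> lpZ p y B ->
  lpZ p (fun m => Cminus (x m) (y m)) (9 * Rmax A B).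
Proof.
  intros Hx Hy.
  assert (Hx' : lpZ p x (Rmax A B)) by (apply lpZ_weaken with A; auto; apply Rmax_l).
  assert (Hy' : lpZ p y (Rmax A B)) by (apply lpZ_weaken with B; auto; apply Rmax_r).
  replace (9 * Rmax A B) with (9 * 1 * Rmax A B) by ring.
  apply (lpZ_dominated3 1 _ x y x 0 0 0); auto; [lra|].
  intros m; rewrite !Z.add_0_r; unfold Cminus; eapply Rle_trans; [apply Cmod_triangle|].
  rewrite Cmod_opp; pose proof (Cmod_ge_0 (x m)); lra.
Qed.

Lemma lpN_pointwise u M i : lpN p u M -> Cmod (u i) <= M.
Proof.
  destruct p as [q| |]; simpl in *; try tauto; [|intros H; apply H].
  intros [HM H]; specialize (H (S i)).
  pose proof (psum_ge_term (fun i => rpow (Cmod (u i)) q) (S i) i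
                (fun _ => rpow_nonneg _ _) ltac:(lia)).
  apply (rpow_le_reg _ _ q); lra.
Qed.

Lemma lpN_finite_support u n : (forall i, (n <= i)%nat -> u i = RtoC 0) -> exists M, lpN p u M.
Proof.
  intros Hu; destruct p as [q| |]; simpl in *; try tauto.
  - set (G := fun i => rpow (Cmod (u i)) q).
    assert (HG : forall i, 0 <= G i) by (intros; apply rpow_nonneg).
    exists (1 + psum G n); pose proof (psum_nonneg G n HG).
    split; [lra|]; intros N.
    eapply Rle_trans.
    { apply (psum_le_support G n N HG); intros i Hi; unfold G; rewrite Hu, Cmod_0, rpow_0_l; auto. }
    eapply Rle_trans; [|apply rpow_ge_base; lra]; fold G; lra.
  - exists (psum (fun i => Cmod (u i)) n); intros i.
    destruct (le_lt_dec n i).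
    + rewrite Hu, Cmod_0 by auto; apply psum_nonneg; intros; apply Cmod_ge_0.
    + apply (psum_ge_term (fun i => Cmod (u i))); auto; intros; apply Cmod_ge_0.
Qed.

Lemma lpN_translate_lpZ g k E : lpZ p g E -> lpN p (fun i => g (Z.of_nat i - k)%Z) E.
Proof.
  destruct p as [q| |]; simpl in *; try tauto.
  - intros [HE H]; split; auto; intros n.
    rewrite (psum_zsum (fun m => rpow (Cmod (g m)) q)); apply H.
  - intros H i; apply H.
Qed.

Definition untranslate (b : nat -> C) (k : Z) : Z -> C :=
  fun m => if Z.leb 0 (m + k) then b (Z.to_nat (m + k)) else RtoC 0.

Lemma lpZ_untranslate b k E : lpN p b E -> lpZ p (untranslate b k) E.
Proof.
  unfold untranslate; destruct p as [q| |]; simpl in *; try tauto.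
  - intros [HE H]; split; auto; intros a n.
    set (G := fun j => if Z.leb 0 j then rpow (Cmod (b (Z.to_nat j))) q else 0).
    assert (HG : forall j, 0 <= G j).
    { intros; unfold G; destruct (Z.leb 0 j); [apply rpow_nonneg | lra]. }
    rewrite (zsum_ext _ (fun m => G (m + k)%Z)).
    2:{ intros m; unfold G; destruct (Z.leb 0 (m + k)); auto; rewrite Cmod_0, rpow_0_l; auto. }
    rewrite zsum_shift; eapply Rle_trans; [apply zsum_le_symmetric; auto|].
    set (N := Z.to_nat _).
    rewrite (psum_ext _ (fun _ => 0)).
    2:{ intros i; unfold G; replace (Z.leb 0 (- Z.of_nat i - 1)) with false; auto.
        symmetry; apply Z.leb_gt; lia. }
    rewrite (psum_ext (fun i => G (Z.of_nat i)) (fun i => rpow (Cmod (b i)) q)).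
    2:{ intros i; unfold G; replace (Z.leb 0 (Z.of_nat i)) with true
          by (symmetry; apply Z.leb_le; lia); rewrite Nat2Z.id; auto. }
    assert (psum (fun _ => 0) N = 0) as -> by (induction N; simpl; lra).
    specialize (H N); lra.
  - intros H m; destruct (Z.leb 0 (m + k)); auto.
    rewrite Cmod_0; pose proof (H 0%nat); pose proof (Cmod_ge_0 (b 0%nat)); lra.
Qed.

Lemma lpZ_pointwise_limit (X : Z -> C) (Xs : nat -> Z -> C) A :
  (forall m eps, eps > 0 -> exists J, forall j, (J <= j)%nat -> Cmod (Cminus (Xs j m) (X m)) < eps) ->
  (forall j, lpZ p (Xs j) A) -> lpZ p X A.
Proof.
  intros Hc HA.
  assert (Hlim : forall m, is_lim_seq (fun j => Cmod (Xs j m)) (Cmod (X m))).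
  { intros m; apply is_lim_seq_Reals; intros e He; destruct (Hc m e He) as [J HJ].
    exists J; intros j Hj; unfold R_dist.
    eapply Rle_lt_trans; [|apply (HJ j); lia].
    apply Cmod_triangle_inv. }
  destruct p as [q| |]; simpl in *; try tauto.
  - split; [apply (HA 0%nat)|]; intros a n.
    apply is_lim_seq_le_const with (fun j => zsum (fun m => rpow (Cmod (Xs j m)) q) a n);
      [|intros j; apply HA].
    induction n; simpl; [apply is_lim_seq_const|].
    apply is_lim_seq_plus'; auto.
    apply (is_lim_seq_continuous (fun t => rpow t q)); [apply rpow_continuity_pt; auto | apply Hlim].
  - intros m; apply is_lim_seq_le_const with (fun j => Cmod (Xs j m)); auto.
Qed.

End LpNorms.

Lemma frac_part_eq x (I : Z) u : 0 <= u < 1 -> x = IZR I + u -> frac_part x = u.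
Proof. intros H1 H2; symmetry; apply (Int_part_frac_part_spec x I u H1 H2). Qed.

Lemma finite_pos_lower_bound (P : nat -> R) n : (forall i, (i < n)%nat -> 0 < P i) ->
  exists d, 0 < d /\ forall i, (i < n)%nat -> d <= P i.
Proof.
  induction n; intros H; [exists 1; split; [lra | intros; lia]|].
  destruct IHn as [d [Hd Hd']]; [intros; apply H; lia|].
  exists (Rmin d (P n)); split; [apply Rmin_pos; auto|].
  intros i Hi; destruct (Nat.eq_dec i n) as [->|]; [apply Rmin_r|].
  eapply Rle_trans; [apply Rmin_l | apply Hd'; lia].
Qed.

Lemma exists_multiple_floor u w : 0 < u -> u <= w ->
  exists j : nat, (1 <= j)%nat /\ INR j * u <= w < INR (S j) * u.
Proof.
  intros Hu Huw; set (r := w / u); pose proof (base_Int_part r) as [H1 H2].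
  assert (1 <= r) by (unfold r; apply Rmult_le_reg_r with u; auto; field_simplify; lra).
  assert (1 <= Int_part r)%Z.
  { apply Z.lt_pred_le, lt_IZR; rewrite <- Z.sub_1_r, minus_IZR; simpl; lra. }
  exists (Z.to_nat (Int_part r)); rewrite S_INR, INR_IZR_INZ, Z2Nat.id by lia.
  split; [lia|]; assert (w = r * u) by (unfold r; field; lra); split; nra.
Qed.

Section IrrationalRotation.
Variable alpha : R.
Hypothesis Hirr : irrational alpha.
Hypothesis Halpha : 0 <= alpha <= 1.

Lemma irrational_mult_not_int (k : nat) (I : Z) : (1 <= k)%nat -> INR k * alpha <> IZR I.
Proof. intros Hk H; apply (Hirr I (Z.of_nat k)); [lia | rewrite <- INR_IZR_INZ; lra]. Qed.

Lemma irrational_in_open_unit : 0 < alpha < 1.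
Proof.
  pose proof (Hirr 0%Z 1%Z ltac:(lia)); pose proof (Hirr 1%Z 1%Z ltac:(lia)); simpl in *.
  rewrite Rmult_1_r in *; destruct Halpha as [[Ha0|Ha0] [Ha1|Ha1]]; subst; lra.
Qed.

(* One Euclidean step: subtract from the larger gap the largest multiple j of the
   smaller one; since u + w < (j + 2) u <= 3 j u, the sum shrinks by 2/3. *)
Lemma two_sided_frac_approx (N : nat) : exists k1 k2 I1 I2 u w,
  (1 <= k1)%nat /\ (1 <= k2)%nat /\ 0 < u < 1 /\ 0 < w < 1 /\
  INR k1 * alpha = IZR I1 + u /\ INR k2 * alpha = IZR I2 + 1 - w /\ u + w <= (2/3)^N.
Proof.
  pose proof irrational_in_open_unit; induction N.
  - exists 1%nat, 1%nat, 0%Z, 0%Z, alpha, (1 - alpha); simpl; repeat split; try lia; lra.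
  - destruct IHN as [k1 [k2 [I1 [I2 [u [w [Hk1 [Hk2 [Hu [Hw [E1 [E2 Hs]]]]]]]]]]]].
    simpl; destruct (Rtotal_order u w) as [Hlt|[Heq|Hgt]].
    + destruct (exists_multiple_floor u w) as [j [Hj [Hj1 Hj2]]]; try lra.
      assert (1 <= INR j) by (apply (le_INR 1); lia).
      assert (INR j * u <> w).
      { intros Hjw; apply (irrational_mult_not_int (j * k1 + k2) (Z.of_nat j * I1 + I2 + 1)); [lia|].
        rewrite plus_INR, mult_INR, !plus_IZR, mult_IZR, <- INR_IZR_INZ; nra. }
      exists k1, (j * k1 + k2)%nat, I1, (Z.of_nat j * I1 + I2)%Z, u, (w - INR j * u).
      rewrite S_INR in Hj2; repeat split; try lia; try nra.
      rewrite plus_INR, mult_INR, !plus_IZR, mult_IZR, <- INR_IZR_INZ; nra.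
    + exfalso; apply (irrational_mult_not_int (k1 + k2) (I1 + I2 + 1)); [lia|].
      rewrite plus_INR, !plus_IZR; simpl; lra.
    + destruct (exists_multiple_floor w u) as [j [Hj [Hj1 Hj2]]]; try lra.
      assert (1 <= INR j) by (apply (le_INR 1); lia).
      assert (INR j * w <> u).
      { intros Hju; apply (irrational_mult_not_int (k1 + j * k2) (I1 + Z.of_nat j * I2 + Z.of_nat j));
          [lia|].
        rewrite plus_INR, mult_INR, !plus_IZR, mult_IZR, <- INR_IZR_INZ; nra. }
      exists (k1 + j * k2)%nat, k2, (I1 + Z.of_nat j * I2 + Z.of_nat j)%Z, I2, (u - INR j * w), w.
      rewrite S_INR in Hj2; repeat split; try lia; try nra.
      rewrite plus_INR, mult_INR, !plus_IZR, mult_IZR, <- INR_IZR_INZ; nra.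
Qed.

Lemma frac_part_mult_pos (k : nat) : (1 <= k)%nat -> 0 < frac_part (INR k * alpha).
Proof.
  intros Hk; destruct (base_fp (INR k * alpha)) as [H1 _].
  destruct (Req_dec (frac_part (INR k * alpha)) 0) as [H|H]; [|lra].
  destruct (fp_nat _ H) as [c Hc]; exfalso; apply (irrational_mult_not_int k c); auto.
Qed.

Lemma small_frac_part eps : 0 < eps -> exists k, (1 <= k)%nat /\ frac_part (INR k * alpha) < eps.
Proof.
  intros He; destruct (pow_lt_1_zero (2/3) ltac:(rewrite Rabs_pos_eq; lra) eps He) as [N HN].
  specialize (HN N (le_n _)); rewrite Rabs_pos_eq in HN by (apply pow_le; lra).
  destruct (two_sided_frac_approx N) as [k [_ [I [_ [u [w [Hk [_ [Hu [Hw [E [_ Hs]]]]]]]]]]]].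
  exists k; rewrite (frac_part_eq _ I u) by (auto; lra); split; auto; lra.
Qed.

Lemma small_frac_part_far eps k0 : 0 < eps ->
  exists k, (k0 <= k)%nat /\ 0 < frac_part (INR k * alpha) < eps.
Proof.
  intros He.
  destruct (finite_pos_lower_bound (fun i => frac_part (INR (S i) * alpha)) k0) as [d [Hd Hd']].
  { intros; apply frac_part_mult_pos; lia. }
  destruct (small_frac_part (Rmin eps d)) as [k [Hk Hu]]; [apply Rmin_pos; auto|].
  pose proof (Rmin_l eps d); pose proof (Rmin_r eps d); pose proof (frac_part_mult_pos k Hk).
  exists k; destruct (le_lt_dec k0 k) as [|Hlt]; [repeat split; auto; lra|].
  specialize (Hd' (pred k) ltac:(lia)); replace (S (pred k)) with k in Hd' by lia; lra.
Qed.

(* Shifting by k with k alpha = I + u, 0 < u small, moves every point of the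
   window to the right by u inside the same side of the cut at 1 - alpha. *)
Lemma sturm_window_recurs theta (a : Z) (n k0 : nat) : exists k : nat, (k0 <= k)%nat /\
  forall i, (i < n)%nat ->
    sturm_v alpha theta (a + Z.of_nat i + Z.of_nat k) = sturm_v alpha theta (a + Z.of_nat i).
Proof.
  pose proof irrational_in_open_unit.
  set (t := fun i : nat => frac_part (IZR (a + Z.of_nat i) * alpha + theta)).
  destruct (finite_pos_lower_bound
              (fun i => if Rlt_dec (t i) (1 - alpha) then 1 - alpha - t i else 1 - t i) n)
    as [d [Hd Hd']].
  { intros i _; destruct (base_fp (IZR (a + Z.of_nat i) * alpha + theta)); fold (t i) in *.
    destruct (Rlt_dec (t i) (1 - alpha)); lra. }
  destruct (small_frac_part_far d k0 Hd) as [k [Hk Hu]].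
  set (u := frac_part (INR k * alpha)) in Hu.
  pose proof (Rplus_Int_part_frac_part (INR k * alpha)) as E; fold u in E.
  set (I := Int_part (INR k * alpha)) in E.
  exists k; split; auto; intros i Hi; specialize (Hd' i Hi); simpl in Hd'.
  set (x := IZR (a + Z.of_nat i)).
  pose proof (base_fp (x * alpha + theta)) as [B1 B2].
  change (frac_part (x * alpha + theta)) with (t i) in B1, B2.
  assert (Hf : frac_part (IZR (a + Z.of_nat i + Z.of_nat k) * alpha + theta) = t i + u).
  { apply frac_part_eq with (Int_part (x * alpha + theta) + I)%Z.
    - destruct (Rlt_dec (t i) (1 - alpha)); lra.
    - pose proof (Rplus_Int_part_frac_part (x * alpha + theta)).
      change (frac_part (x * alpha + theta)) with (t i) in *.
      replace (IZR (a + Z.of_nat i + Z.of_nat k)) with (x + INR k)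
        by (unfold x; rewrite !plus_IZR, <- !INR_IZR_INZ; ring).
      rewrite plus_IZR; lra. }
  unfold sturm_v; rewrite Hf; fold x; change (frac_part (x * alpha + theta)) with (t i).
  destruct (Rlt_dec (t i) (1 - alpha)), (Rle_dec (1 - alpha) (t i + u)), (Rle_dec (1 - alpha) (t i));
    try lra; auto.
  destruct (Rlt_dec (t i + u) 1), (Rlt_dec (t i) 1); lra.
Qed.

End IrrationalRotation.

Definition sub_scal {I : Type} (T : (I -> C) -> (I -> C)) (z : C) (x : I -> C) : I -> C :=
  fun i => Cminus (T x i) (Cmult z (x i)).

Section ResolventCriterion.
Variable I : Type.
Variable nle : (I -> C) -> R -> Prop.
Variable T : (I -> C) -> (I -> C).
Variable z : C.
Variable K : R.
Let inlp x := exists M, nle x M.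
Let S := sub_scal T z.
Hypothesis HK : 0 <= K.
Hypothesis inlp_lincomb : forall x y a, inlp x -> inlp y -> inlp (fun i => Cplus (x i) (Cmult a (y i))).
Hypothesis inlp_S : forall x, inlp x -> inlp (S x).
Hypothesis S_lincomb : forall x y a,
  S (fun i => Cplus (x i) (Cmult a (y i))) = (fun i => Cplus (S x i) (Cmult a (S y i))).
Hypothesis S_injective : forall x1 x2, inlp x1 -> inlp x2 -> S x1 = S x2 -> x1 = x2.
Hypothesis S_solvable : forall y M, nle y M -> exists x, nle x (K * M) /\ S x = y.

Lemma resolvent_of_solvable : resolvent nle T z.
Proof.
  set (B := fun y => epsilon (inhabits (fun _ : I => RtoC 0)) (fun x => inlp x /\ S x = y)).
  assert (HB : forall y M, nle y M -> (inlp (B y) /\ S (B y) = y) /\ nle (B y) (K * M)).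
  { intros y M Hy; destruct (S_solvable y M Hy) as [x [Hx Sx]].
    assert (Hspec : inlp (B y) /\ S (B y) = y) by (apply epsilon_spec; exists x; split; eauto; exists (K * M); auto).
    split; auto.
    replace (B y) with x; auto.
    apply S_injective; [exists (K * M); auto | apply Hspec | rewrite Sx; symmetry; apply Hspec]. }
  exists B; split; [|split; [|split; [|split]]].
  - intros y [M Hy]; apply (HB y M Hy).
  - intros x y a [Mx Hx] [My Hy].
    destruct (HB x Mx Hx) as [[Bx SBx] _], (HB y My Hy) as [[By SBy] _].
    destruct (inlp_lincomb x y a (ex_intro _ Mx Hx) (ex_intro _ My Hy)) as [M Hxy].
    destruct (HB _ M Hxy) as [[Bxy SBxy] _].
    apply S_injective; auto; rewrite SBxy, S_lincomb, SBx, SBy; reflexivity.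
  - exists K; split; auto; intros x M Hx; apply (HB x M Hx).
  - intros x Hx; destruct (inlp_S x Hx) as [M HSx].
    destruct (HB _ M HSx) as [[BSx SBSx] _]; apply S_injective; auto.
  - intros x [M Hx]; apply (HB x M Hx).
Qed.

End ResolventCriterion.

Definition Hop_minus (lambda alpha theta : R) (z : C) : (Z -> C) -> Z -> C :=
  sub_scal (Hop lambda alpha theta) z.

Definition Hop_plus_minus (lambda alpha theta : R) (z : C) : (nat -> C) -> nat -> C :=
  sub_scal (Hop_plus lambda alpha theta) z.

Lemma sturm_v_01 alpha theta n : sturm_v alpha theta n = 0 \/ sturm_v alpha theta n = 1.
Proof. unfold sturm_v; destruct (Rle_dec _ _); [destruct (Rlt_dec _ _)|]; auto. Qed.

Section DiscreteSchroedinger.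
Variables lambda alpha theta : R.
Variable z : C.
Notation H := (Hop_minus lambda alpha theta z).
Notation v := (sturm_v alpha theta).

Lemma Hop_minus_eq w m : H w m = Cminus (Cplus (Cplus (w (m + 1)%Z) (w (m - 1)%Z))
                 (Cmult (RtoC (lambda * v m)) (w m))) (Cmult z (w m)).
Proof. reflexivity. Qed.

Lemma Hop_minus_lincomb x y a :
  H (fun n => Cplus (x n) (Cmult a (y n))) = (fun m => Cplus (H x m) (Cmult a (H y m))).
Proof. extensionality m; rewrite !Hop_minus_eq; ring. Qed.

Lemma Hop_minus_sub x y m : H (fun n => Cminus (x n) (y n)) m = Cminus (H x m) (H y m).
Proof. rewrite !Hop_minus_eq; ring. Qed.

Lemma Hop_minus_bound w m : Cmod (H w m) <= (1 + Rabs lambda + Cmod z) *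
  (Cmod (w (m + 1)%Z) + Cmod (w (m + -1)%Z) + Cmod (w (m + 0)%Z)).
Proof.
  rewrite Hop_minus_eq, Z.add_0_r; replace (m - 1)%Z with (m + -1)%Z by lia.
  set (a := w (m + 1)%Z); set (b := w (m + -1)%Z); set (c := w m).
  unfold Cminus; eapply Rle_trans; [apply Cmod_triangle|].
  rewrite Cmod_opp; eapply Rle_trans; [apply Rplus_le_compat_r, Cmod_triangle|].
  eapply Rle_trans; [apply Rplus_le_compat_r, Rplus_le_compat_r, Cmod_triangle|].
  rewrite !Cmod_mult, Cmod_R.
  assert (Rabs (lambda * v m) <= Rabs lambda).
  { rewrite Rabs_mult; pose proof (Rabs_pos lambda).
    destruct (sturm_v_01 alpha theta m) as [-> | ->]; rewrite ?Rabs_R0, ?Rabs_R1; lra. }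
  pose proof (Cmod_ge_0 a); pose proof (Cmod_ge_0 b); pose proof (Cmod_ge_0 c).
  pose proof (Cmod_ge_0 z); pose proof (Rabs_pos lambda); pose proof (Rabs_pos (lambda * v m)).
  nra.
Qed.

Lemma Hop_minus_mult (chi : Z -> R) d m : H (fun n => Cmult (RtoC (chi n)) (d n)) m =
  Cplus (Cplus (Cmult (RtoC (chi (m + 1)%Z - chi m)) (d (m + 1)%Z))
               (Cmult (RtoC (chi (m - 1)%Z - chi m)) (d (m - 1)%Z)))
        (Cmult (RtoC (chi m)) (H d m)).
Proof. rewrite !Hop_minus_eq, !RtoC_minus; ring. Qed.

Lemma Hop_minus_pointwise_limit (X : nat -> Z -> C) (Xl y : Z -> C) :
  (forall m e, e > 0 -> exists J, forall j, (J <= j)%nat -> Cmod (Cminus (X j m) (Xl m)) < e) ->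
  (forall j m, (Z.abs m <= Z.of_nat j)%Z -> H (X j) m = y m) ->
  H Xl = y.
Proof.
  intros HX Hy; extensionality c; set (Cst := 1 + Rabs lambda + Cmod z).
  assert (HCst : 0 < Cst) by (unfold Cst; pose proof (Rabs_pos lambda); pose proof (Cmod_ge_0 z); lra).
  assert (Hsym : forall a b, Cmod (Cminus a b) = Cmod (Cminus b a))
    by (intros; rewrite <- Cmod_opp; f_equal; ring).
  assert (Hres : Cmod (Cminus (H Xl c) (y c)) = 0).
  { apply Rle_antisym; [|apply Cmod_ge_0]; apply Rnot_lt_le; intros Hlt.
    set (e := Cmod (Cminus (H Xl c) (y c)) / (4 * Cst)).
    assert (He : e > 0) by (unfold e; apply Rdiv_lt_0_compat; lra).
    destruct (HX (c + 1)%Z e He) as [J1 HJ1], (HX (c + -1)%Z e He) as [J2 HJ2],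
      (HX (c + 0)%Z e He) as [J3 HJ3].
    set (j := (J1 + J2 + J3 + Z.to_nat (Z.abs c))%nat).
    specialize (HJ1 j ltac:(lia)); specialize (HJ2 j ltac:(lia)); specialize (HJ3 j ltac:(lia)).
    pose proof (Hop_minus_bound (fun m => Cminus (Xl m) (X j m)) c) as Hb.
    rewrite Hop_minus_sub, (Hy j c) in Hb by lia; simpl in Hb.
    rewrite (Hsym (Xl (c + 1)%Z)), (Hsym (Xl (c + -1)%Z)), (Hsym (Xl (c + 0)%Z)) in Hb.
    assert (Hsmall : Cmod (Cminus (H Xl c) (y c)) <= Cst * (3 * e))
      by (eapply Rle_trans; [apply Hb | apply Rmult_le_compat_l; lra]).
    unfold e in Hsmall; field_simplify in Hsmall; lra. }
  apply Cmod_eq_0 in Hres.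
  replace (H Xl c) with (Cplus (Cminus (H Xl c) (y c)) (y c)) by ring; rewrite Hres; ring.
Qed.

End DiscreteSchroedinger.

Lemma ext0_eq x m : ext0 x m = if Z.leb 0 m then x (Z.to_nat m) else RtoC 0.
Proof. destruct m; reflexivity. Qed.

Section HalfLineTranslation.
Variables lambda alpha theta : R.
Variable z : C.
Notation v := (sturm_v alpha theta).

Lemma Hop_plus_minus_translate w a n k :
  (forall m, (m < a)%Z \/ (a + Z.of_nat n <= m)%Z -> w m = RtoC 0) ->
  (1 - a <= Z.of_nat k)%Z ->
  (forall i, (i < n)%nat -> v (a + Z.of_nat i + Z.of_nat k)%Z = v (a + Z.of_nat i)%Z) ->
  Hop_plus_minus lambda alpha theta z (fun i => w (Z.of_nat i - Z.of_nat k)%Z) =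
  (fun i => Hop_minus lambda alpha theta z w (Z.of_nat i - Z.of_nat k)%Z).
Proof.
  intros Hw Hk Hv; extensionality i.
  unfold Hop_plus_minus, Hop_minus, sub_scal, Hop_plus, Hop; rewrite !ext0_eq.
  replace (Z.leb 0 (Z.of_nat i + 1)) with true by (symmetry; apply Z.leb_le; lia).
  replace (Z.leb 0 (Z.of_nat i)) with true by (symmetry; apply Z.leb_le; lia).
  rewrite Nat2Z.id, Z2Nat.id by lia.
  replace (Z.of_nat i + 1 - Z.of_nat k)%Z with (Z.of_nat i - Z.of_nat k + 1)%Z by lia.
  assert (Eprev : (if Z.leb 0 (Z.of_nat i - 1)
                   then w (Z.of_nat (Z.to_nat (Z.of_nat i - 1)) - Z.of_nat k)%Z else RtoC 0)
                  = w (Z.of_nat i - Z.of_nat k - 1)%Z).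
  { destruct (Z.leb 0 (Z.of_nat i - 1)) eqn:E.
    - apply Z.leb_le in E; rewrite Z2Nat.id by lia; f_equal; lia.
    - apply Z.leb_gt in E; symmetry; apply Hw; lia. }
  rewrite Eprev.
  destruct (classic ((Z.of_nat i - Z.of_nat k < a)%Z \/
                     (a + Z.of_nat n <= Z.of_nat i - Z.of_nat k)%Z)) as [Hout|Hin].
  - rewrite (Hw _ Hout); ring.
  - specialize (Hv (Z.to_nat (Z.of_nat i - Z.of_nat k - a)) ltac:(lia)).
    rewrite Z2Nat.id in Hv by lia.
    replace (a + (Z.of_nat i - Z.of_nat k - a) + Z.of_nat k)%Z with (Z.of_nat i) in Hv by lia.
    replace (a + (Z.of_nat i - Z.of_nat k - a))%Z with (Z.of_nat i - Z.of_nat k)%Z in Hv by lia.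
    rewrite Hv; reflexivity.
Qed.

Lemma Hop_minus_untranslate b k m :
  (1 <= m + Z.of_nat k)%Z -> v (m + Z.of_nat k)%Z = v m ->
  Hop_minus lambda alpha theta z (untranslate b (Z.of_nat k)) m =
  Hop_plus_minus lambda alpha theta z b (Z.to_nat (m + Z.of_nat k)).
Proof.
  intros Hm Hv.
  unfold Hop_plus_minus, Hop_minus, sub_scal, Hop_plus, Hop, untranslate; rewrite !ext0_eq.
  set (i := Z.to_nat (m + Z.of_nat k)).
  assert (Ei : Z.of_nat i = (m + Z.of_nat k)%Z) by (unfold i; lia).
  rewrite Ei.
  replace (Z.leb 0 (m + 1 + Z.of_nat k)) with true by (symmetry; apply Z.leb_le; lia).
  replace (Z.leb 0 (m - 1 + Z.of_nat k)) with true by (symmetry; apply Z.leb_le; lia).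
  replace (Z.leb 0 (m + Z.of_nat k)) with true by (symmetry; apply Z.leb_le; lia).
  replace (Z.leb 0 (m + Z.of_nat k + 1)) with true by (symmetry; apply Z.leb_le; lia).
  replace (Z.leb 0 (m + Z.of_nat k - 1)) with true by (symmetry; apply Z.leb_le; lia).
  replace (m + 1 + Z.of_nat k)%Z with (m + Z.of_nat k + 1)%Z by lia.
  replace (m - 1 + Z.of_nat k)%Z with (m + Z.of_nat k - 1)%Z by lia.
  rewrite Hv; reflexivity.
Qed.

End HalfLineTranslation.

Lemma exists_nat_inv_lt c e : 0 <= c -> 0 < e -> exists L : nat, (0 < L)%nat /\ c * / INR L < e.
Proof.
  intros Hc He; destruct (archimed (c / e)) as [H1 _].
  assert (0 <= c / e) by (apply Rdiv_le_0_compat; lra).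
  exists (S (Z.to_nat (up (c / e)))); split; [lia|].
  set (N := INR _); assert (HN : c / e < N).
  { unfold N; rewrite S_INR, INR_IZR_INZ.
    destruct (Z_le_dec 0 (up (c / e))); [rewrite Z2Nat.id by auto; lra|].
    assert (IZR (up (c / e)) <= -1) by (apply (IZR_le _ (-1)); lia); lra. }
  assert (0 < N) by lra.
  apply Rmult_lt_reg_r with N; auto; rewrite Rmult_assoc, Rinv_l, Rmult_1_r by lra.
  replace c with (c / e * e) by (field; lra); nra.
Qed.

Lemma Cmod_le_Rabs_parts x : Cmod x <= Rabs (fst x) + Rabs (snd x).
Proof.
  destruct x as [a b]; simpl fst; simpl snd.
  replace (a, b) with (Cplus (RtoC a) (Cmult Ci (RtoC b)))
    by (unfold Cplus, Cmult, RtoC, Ci; simpl; f_equal; ring).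
  eapply Rle_trans; [apply Cmod_triangle|]; rewrite Cmod_mult, Cmod_Ci, !Cmod_R; lra.
Qed.

Lemma C_Cauchy_cvg (u : nat -> C) :
  (forall e, 0 < e -> exists J, forall j j', (J <= j)%nat -> (J <= j')%nat -> Cmod (Cminus (u j) (u j')) < e) ->
  exists l, forall e, e > 0 -> exists J, forall j, (J <= j)%nat -> Cmod (Cminus (u j) l) < e.
Proof.
  intros Hu.
  assert (Cre : Cauchy_crit (fun j => fst (u j))).
  { intros e He; destruct (Hu e He) as [J HJ]; exists J; intros n m Hn Hm; unfold R_dist.
    eapply Rle_lt_trans; [|apply (HJ n m); lia].
    replace (fst (u n) - fst (u m)) with (Re (Cminus (u n) (u m))) by (simpl; ring).
    apply re_le_Cmod. }
  assert (Cim : Cauchy_crit (fun j => snd (u j))).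
  { intros e He; destruct (Hu e He) as [J HJ]; exists J; intros n m Hn Hm; unfold R_dist.
    eapply Rle_lt_trans; [|apply (HJ n m); lia].
    replace (snd (u n) - snd (u m)) with (snd (Cminus (u n) (u m))) by (simpl; ring).
    eapply Rle_trans; [apply Rmax_r | apply Rmax_Cmod]. }
  destruct (Rcomplete.R_complete _ Cre) as [lr Hr], (Rcomplete.R_complete _ Cim) as [li Hi].
  exists (lr, li); intros e He.
  destruct (Hr (e / 2) ltac:(lra)) as [J1 HJ1], (Hi (e / 2) ltac:(lra)) as [J2 HJ2].
  exists (max J1 J2); intros j Hj; eapply Rle_lt_trans; [apply Cmod_le_Rabs_parts|].
  specialize (HJ1 j ltac:(lia)); specialize (HJ2 j ltac:(lia)); unfold R_dist in *.
  replace (fst (Cminus (u j) (lr, li))) with (fst (u j) - lr) by (simpl; ring).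
  replace (snd (Cminus (u j) (lr, li))) with (snd (u j) - li) by (simpl; ring); lra.
Qed.

Definition tent (c : Z) (L : nat) (m : Z) : R :=
  Rmax 0 (Rmin 1 (2 - IZR (Z.abs (m - c)) / INR L)).

Lemma tent_lipschitz c L m s : (0 < L)%nat -> (Z.abs s <= 1)%Z ->
  Rabs (tent c L (m + s) - tent c L m) <= / INR L.
Proof.
  intros HL Hs; assert (0 < INR L) by (apply lt_0_INR; lia).
  apply Rle_trans with (Rabs ((IZR (Z.abs (m - c)) - IZR (Z.abs (m + s - c))) * / INR L)).
  { unfold tent, Rmax, Rmin; repeat destruct (Rle_dec _ _);
      apply Rabs_le; split_Rabs; unfold Rdiv in *; lra. }
  rewrite Rabs_mult, Rabs_inv, (Rabs_pos_eq (INR L)) by lra.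
  rewrite <- (Rmult_1_l (/ INR L)) at 2.
  apply Rmult_le_compat_r; [left; apply Rinv_0_lt_compat; lra|].
  rewrite <- minus_IZR, <- abs_IZR; apply (IZR_le _ 1); lia.
Qed.

Lemma tent_center c L : tent c L c = 1.
Proof.
  unfold tent; rewrite Z.sub_diag; simpl; unfold Rdiv; rewrite Rmult_0_l.
  unfold Rmin, Rmax; repeat destruct (Rle_dec _ _); lra.
Qed.

Lemma tent_outside c L m : (0 < L)%nat -> (2 * Z.of_nat L <= Z.abs (m - c))%Z -> tent c L m = 0.
Proof.
  intros HL Hm; unfold tent; assert (0 < INR L) by (apply lt_0_INR; lia).
  assert (2 * INR L <= IZR (Z.abs (m - c))).
  { rewrite INR_IZR_INZ, <- mult_IZR; apply IZR_le; lia. }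
  assert (2 - IZR (Z.abs (m - c)) / INR L <= 0).
  { apply Rmult_le_reg_r with (INR L); auto; field_simplify; lra. }
  unfold Rmin, Rmax; repeat destruct (Rle_dec _ _); lra.
Qed.

Section WholeLineFromHalfLine.
Variable p : Rbar.
Variables lambda alpha theta : R.
Variable z : C.
Variable Bp : (nat -> C) -> (nat -> C).
Variable K : R.
Hypothesis Hp : exponent_ok p.
Hypothesis Hirr : irrational alpha.
Hypothesis Halpha : 0 <= alpha <= 1.
Hypothesis HK : 0 <= K.
Hypothesis Bp_bounded : forall x M, lpN p x M -> lpN p (Bp x) (K * M).
Hypothesis Bp_left_inv : forall x, (exists M, lpN p x M) ->
  Bp (Hop_plus_minus lambda alpha theta z x) = x.
Hypothesis Bp_right_inv : forall x, (exists M, lpN p x M) ->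
  Hop_plus_minus lambda alpha theta z (Bp x) = x.
Notation H := (Hop_minus lambda alpha theta z).
Notation v := (sturm_v alpha theta).

Lemma lpZ_Hop_minus x M : lpZ p x M -> lpZ p (H x) (9 * (1 + Rabs lambda + Cmod z) * M).
Proof.
  intros Hx; apply (lpZ_dominated3 p Hp _ M x x x 1 (-1) 0); auto; [|apply Hop_minus_bound].
  pose proof (Rabs_pos lambda); pose proof (Cmod_ge_0 z); lra.
Qed.

Lemma finite_support_estimate w a n E :
  (forall m, (m < a)%Z \/ (a + Z.of_nat n <= m)%Z -> w m = RtoC 0) ->
  lpZ p (H w) E -> forall m, Cmod (w m) <= K * E.
Proof.
  intros Hw HE m; pose proof (lpZ_nonneg p Hp _ _ HE) as HE0.
  destruct (sturm_window_recurs alpha Hirr Halpha theta a n (Z.to_nat (1 - a))) as [k [Hk Hv]].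
  set (w' := fun i => w (Z.of_nat i - Z.of_nat k)%Z).
  assert (Hw' : exists M, lpN p w' M).
  { apply (lpN_finite_support p Hp w' (Z.to_nat (a + Z.of_nat n + Z.of_nat k))).
    intros i Hi; apply Hw; lia. }
  assert (Hbound : lpN p w' (K * E)).
  { rewrite <- (Bp_left_inv w' Hw'); apply Bp_bounded.
    unfold w'; rewrite (Hop_plus_minus_translate _ _ _ _ w a n) by (auto; lia).
    apply lpN_translate_lpZ; auto. }
  destruct (Z_le_dec 0 (m + Z.of_nat k)) as [Hm|Hm].
  - pose proof (lpN_pointwise p Hp _ _ (Z.to_nat (m + Z.of_nat k)) Hbound) as Hwm; unfold w' in Hwm.
    rewrite Z2Nat.id in Hwm by lia.
    replace (m + Z.of_nat k - Z.of_nat k)%Z with m in Hwm by lia; exact Hwm.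
  - rewrite Hw, Cmod_0 by lia; apply Rmult_le_pos; auto.
Qed.

(* Apply [finite_support_estimate] to [tent c L * d]: only the commutator
   with the tent survives, and it is O(1/L) by [tent_lipschitz]. *)
Lemma cutoff_estimate d A c L : (0 < L)%nat -> lpZ p d A ->
  (forall m, (Z.abs (m - c) <= 2 * Z.of_nat L)%Z -> H d m = RtoC 0) ->
  Cmod (d c) <= K * (9 * / INR L * A).
Proof.
  intros HL HA Hd; pose proof (lpZ_nonneg p Hp _ _ HA) as HA0.
  assert (HL' : 0 < / INR L) by (apply Rinv_0_lt_compat, lt_0_INR; lia).
  set (w := fun m => Cmult (RtoC (tent c L m)) (d m)).
  assert (Hsupp : forall m, (m < c - 2 * Z.of_nat L + 1)%Z \/
            (c - 2 * Z.of_nat L + 1 + Z.of_nat (4 * L - 1) <= m)%Z -> w m = RtoC 0).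
  { intros m Hm; unfold w; rewrite tent_outside by (auto; lia); ring. }
  assert (HHw : lpZ p (H w) (9 * / INR L * A)).
  { apply (lpZ_dominated3 p Hp (/ INR L) A d d d 1 (-1) 0); auto; [lra|].
    intros m; unfold w; rewrite Hop_minus_mult.
    assert (Cmult (RtoC (tent c L m)) (H d m) = RtoC 0) as ->.
    { destruct (Z_le_dec (Z.abs (m - c)) (2 * Z.of_nat L)).
      - rewrite Hd by auto; ring.
      - rewrite tent_outside by (auto; lia); ring. }
    rewrite Cplus_0_r; eapply Rle_trans; [apply Cmod_triangle|]; rewrite !Cmod_mult, !Cmod_R.
    pose proof (tent_lipschitz c L m 1 HL ltac:(lia)).
    pose proof (tent_lipschitz c L m (-1) HL ltac:(lia)).
    replace (m - 1)%Z with (m + -1)%Z by lia; rewrite Z.add_0_r.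
    pose proof (Cmod_ge_0 (d (m + 1)%Z)); pose proof (Cmod_ge_0 (d (m + -1)%Z));
      pose proof (Cmod_ge_0 (d m)); nra. }
  pose proof (finite_support_estimate w _ _ _ Hsupp HHw c) as Hc.
  unfold w in Hc; rewrite Cmod_mult, Cmod_R, tent_center, Rabs_R1, Rmult_1_l in Hc; exact Hc.
Qed.

Lemma Hop_minus_injective x1 x2 : (exists M, lpZ p x1 M) -> (exists M, lpZ p x2 M) ->
  H x1 = H x2 -> x1 = x2.
Proof.
  intros [M1 H1] [M2 H2] Heq.
  set (d := fun m => Cminus (x1 m) (x2 m)).
  assert (Hd : lpZ p d (9 * Rmax M1 M2)) by (apply lpZ_sub; auto).
  pose proof (lpZ_nonneg p Hp d _ Hd).
  assert (Hker : forall c, Cmod (d c) = 0).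
  { intros c; apply Rle_antisym; [|apply Cmod_ge_0]; apply Rnot_lt_le; intros Hlt.
    destruct (exists_nat_inv_lt (K * 9 * (9 * Rmax M1 M2)) (Cmod (d c))) as [L [HL HL']]; auto.
    { apply Rmult_le_pos; auto; lra. }
    assert (Cmod (d c) <= K * (9 * / INR L * (9 * Rmax M1 M2))).
    { apply cutoff_estimate; auto; intros m _.
      unfold d; rewrite Hop_minus_sub, Heq; ring. }
    lra. }
  extensionality c; specialize (Hker c); apply Cmod_eq_0 in Hker; unfold d in Hker.
  replace (x1 c) with (Cplus (Cminus (x1 c) (x2 c)) (x2 c)) by ring.
  rewrite Hker; ring.
Qed.

Lemma approximate_solution y M j : lpZ p y M ->
  exists X, lpZ p X (K * M) /\ forall m, (Z.abs m <= Z.of_nat j)%Z -> H X m = y m.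
Proof.
  intros Hy.
  destruct (sturm_window_recurs alpha Hirr Halpha theta (- Z.of_nat j) (S (j + j)) (S j))
    as [k [Hk Hv]].
  set (yj := fun m => if Z.leb (Z.abs m) (Z.of_nat j) then y m else RtoC 0).
  set (g := fun i : nat => yj (Z.of_nat i - Z.of_nat k)%Z).
  assert (Hyj : lpZ p yj M).
  { apply (lpZ_dominated p Hp y); auto; intros m; unfold yj.
    destruct (Z.leb _ _); [lra | rewrite Cmod_0; apply Cmod_ge_0]. }
  assert (Hg : lpN p g M) by (apply lpN_translate_lpZ; auto).
  exists (untranslate (Bp g) (Z.of_nat k)); split; [apply lpZ_untranslate, Bp_bounded; auto|].
  intros m Hm.
  specialize (Hv (Z.to_nat (m + Z.of_nat j)) ltac:(lia)); rewrite Z2Nat.id in Hv by lia.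
  replace (- Z.of_nat j + (m + Z.of_nat j))%Z with m in Hv by lia.
  rewrite Hop_minus_untranslate, Bp_right_inv by (eauto; lia).
  unfold g, yj; rewrite Z2Nat.id by lia.
  replace (m + Z.of_nat k - Z.of_nat k)%Z with m by lia.
  replace (Z.leb (Z.abs m) (Z.of_nat j)) with true by (symmetry; apply Z.leb_le; lia); reflexivity.
Qed.

(* Two approximate solutions agree with y on [-j, j], so by [cutoff_estimate]
   their difference at c is O(1/L) once j >= |c| + 2L. *)
Lemma approximate_solutions_Cauchy (X : nat -> Z -> C) y E :
  (forall j, lpZ p (X j) E) -> (forall j m, (Z.abs m <= Z.of_nat j)%Z -> H (X j) m = y m) ->
  forall c e, 0 < e ->
  exists J, forall j j', (J <= j)%nat -> (J <= j')%nat -> Cmod (Cminus (X j c) (X j' c)) < e.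
Proof.
  intros HX Hy c e He; pose proof (lpZ_nonneg p Hp _ _ (HX 0%nat)).
  destruct (exists_nat_inv_lt (K * 9 * (9 * Rmax E E)) e) as [L [HL HL']]; auto.
  { apply Rmult_le_pos; [|apply Rmult_le_pos, Rmax_case]; lra. }
  exists (Z.to_nat (Z.abs c) + 2 * L)%nat; intros j j' Hj Hj'.
  assert (Cmod (Cminus (X j c) (X j' c)) <= K * (9 * / INR L * (9 * Rmax E E))).
  { apply (cutoff_estimate (fun m => Cminus (X j m) (X j' m))); auto; [apply lpZ_sub; auto|].
    intros m Hm; rewrite Hop_minus_sub, !Hy by lia; ring. }
  lra.
Qed.

Lemma Hop_minus_solvable y M : lpZ p y M -> exists x, lpZ p x (K * M) /\ H x = y.
Proof.
  intros Hy.
  destruct (choice (fun j X => lpZ p X (K * M) /\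
                          forall m, (Z.abs m <= Z.of_nat j)%Z -> H X m = y m)) as [X HX].
  { intros j; apply approximate_solution; auto. }
  destruct (choice (fun c l => forall e, e > 0 ->
              exists J, forall j, (J <= j)%nat -> Cmod (Cminus (X j c) l) < e)) as [Xl HXl].
  { intros c; apply C_Cauchy_cvg; intros e He.
    apply (approximate_solutions_Cauchy X y (K * M)); auto; apply HX. }
  exists Xl; split.
  - apply (lpZ_pointwise_limit p Hp Xl X); auto; apply HX.
  - apply (Hop_minus_pointwise_limit lambda alpha theta z X); auto; apply HX.
Qed.

End WholeLineFromHalfLine.

Theorem proposition5p19 (p : Rbar) (alpha theta lambda : R) :
  exponent_ok p ->
  0 <= alpha <= 1 -> irrational alpha ->
  0 <= theta < 1 ->
  forall z : C,
    spectrum (lpnorm_le_Z p) (Hop lambda alpha theta) z ->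
    spectrum (lpnorm_le_N p) (Hop_plus lambda alpha theta) z.
Proof.
  intros Hp Halpha Hirr _ z HZ HN; apply HZ; clear HZ.
  rewrite lpN_eq in HN; rewrite lpZ_eq.
  destruct HN as [Bp [_ [_ [[K [HK Bp_bounded]] [Bp_left_inv Bp_right_inv]]]]].
  apply (resolvent_of_solvable _ _ _ _ K HK).
  - intros x y a [Mx Hx] [My Hy]; eexists; apply lpZ_lincomb; eauto.
  - intros x [M Hx]; eexists; apply lpZ_Hop_minus; eauto.
  - apply Hop_minus_lincomb.
  - intros x1 x2; eapply Hop_minus_injective; eauto.
  - intros y M; eapply Hop_minus_solvable; eauto.
Qed.
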